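(* Let $\Gamma$ be a countable group and let $\mathcal P\subseteq\mathrm{Sub}_{[\infty]}(\Gamma)$ be any subset satisfying condition $(\ast)$. Let $\overline{\mathcal P}$ denote the closure of $\mathcal P$ in $\mathrm{Sub}_{[\infty]}(\Gamma)$. Then $\mathcal{HT}(\Gamma)\cap\overline{\mathcal P}$ is a dense $G_\delta$ subset of $\overline{\mathcal P}$.
   Context: $\mathrm{Sub}(\Gamma)$ is the set of subgroups with the topology generated by the clopen sets $\{\Lambda:\mathcal I\subseteq\Lambda,\ \mathcal O\cap\Lambda=\emptyset\}$, $\mathcal I,\mathcal O$ finite; $\mathrm{Sub}_{[\infty]}(\Gamma)$ is the subspace of infinite index subgroups. $\mathcal{HT}(\Gamma)$ is the set of infinite index $\Lambda$ with $\Lambda\backslash\Gamma\curvearrowleft\Gamma$ (right multiplication) highly transitive. Condition $(\ast)$ for $\mathcal P$: for every $\Lambda\in\mathcal P$, every $d\ge1$, every $g_1,\dots,g_{2d}\in\Gamma$ with $\Lambda g_1,\dots,\Lambda g_{2d}$ pairwise distinct, and every neighborhood $\mathcal V$ of $\Lambda$, there exist $\Lambda'\in\mathcal P\cap\mathcal V$ and $\gamma\in\Gamma$ with $\Lambda' g_i\gamma=\Lambda' g_{i+d}$ for all $i\in\{1,\dots,d\}$. *)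

From Stdlib Require Import List Arith.
Import ListNotations.

Record group := Group {
  carrier :> Type;
  gmul : carrier -> carrier -> carrier;
  gone : carrier;
  ginv : carrier -> carrier;
  gmul_assoc : forall x y z, gmul x (gmul y z) = gmul (gmul x y) z;
  gmul_1l : forall x, gmul gone x = x;
  gmul_1r : forall x, gmul x gone = x;
  gmul_Vl : forall x, gmul (ginv x) x = gone;
  gmul_Vr : forall x, gmul x (ginv x) = gone
}.

Arguments gmul {g}.
Arguments gone {g}.
Arguments ginv {g}.

Definition countable_group (G : group) : Prop :=
  exists f : G -> nat, forall x y, f x = f y -> x = y.

Definition subset_of (G : group) := G -> Prop.

Definition is_subgroup {G : group} (L : subset_of G) : Prop :=
  L gone /\ (forall x y, L x -> L y -> L (gmul x y)) /\ (forall x, L x -> L (ginv x)).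

(* Equality of right cosets: L g = L h  iff  g h^-1 \in L. *)
Definition same_coset {G : group} (L : subset_of G) (g h : G) : Prop :=
  L (gmul g (ginv h)).

(* Infinite index: the set of right cosets L\G is not finite, i.e. no finite
   list of elements meets every right coset. *)
Definition infinite_index {G : group} (L : subset_of G) : Prop :=
  ~ exists s : list G, forall g, exists h, In h s /\ same_coset L g h.

Definition SubInf {G : group} (L : subset_of G) : Prop :=
  is_subgroup L /\ infinite_index L.

(* Basic clopen set {L : I ⊆ L, O ∩ L = ∅} of Sub(G), I, O finite. *)
Definition basic {G : group} (I O : list G) (L : subset_of G) : Prop :=
  (forall x, In x I -> L x) /\ (forall x, In x O -> ~ L x).

Definition open_SubInf {G : group} (U : subset_of G -> Prop) : Prop :=
  forall L, U L -> SubInf L /\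
    exists I O, basic I O L /\ forall L', SubInf L' -> basic I O L' -> U L'.

Definition closure_SubInf {G : group} (P : subset_of G -> Prop) (L : subset_of G) : Prop :=
  SubInf L /\ forall I O, basic I O L -> exists L', P L' /\ basic I O L'.

Definition pairwise_distinct_cosets {G : group} (L : subset_of G) (n : nat) (x : nat -> G) : Prop :=
  forall i j, i < n -> j < n -> i <> j -> ~ same_coset L (x i) (x j).

Definition highly_transitive {G : group} (L : subset_of G) : Prop :=
  forall (n : nat) (x y : nat -> G),
    pairwise_distinct_cosets L n x -> pairwise_distinct_cosets L n y ->
    exists gamma : G, forall i, i < n -> same_coset L (gmul (x i) gamma) (y i).

Definition HT {G : group} (L : subset_of G) : Prop :=
  SubInf L /\ highly_transitive L.

(* Condition ( * ) for P (0-based indices: g_0..g_{2d-1}, pairing g_i with g_{i+d}).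
   Neighbourhoods of L are quantified through basic neighbourhoods (every
   neighbourhood contains one, and the condition is monotone in V). *)
Definition condition_star {G : group} (P : subset_of G -> Prop) : Prop :=
  forall L, P L ->
  forall (d : nat) (g : nat -> G), 1 <= d ->
    pairwise_distinct_cosets L (2 * d) g ->
    forall I O, basic I O L ->
      exists L' gamma, P L' /\ basic I O L' /\
        forall i, i < d -> same_coset L' (gmul (g i) gamma) (g (i + d)).

Definition dense_in {G : group} (A C : subset_of G -> Prop) : Prop :=
  forall L, C L -> forall I O, basic I O L -> exists L', A L' /\ C L' /\ basic I O L'.

Definition Gdelta_in {G : group} (A C : subset_of G -> Prop) : Prop :=
  exists U : nat -> (subset_of G -> Prop),
    (forall n, open_SubInf (U n)) /\
    forall L, A L <-> (C L /\ forall n, U n L).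

(* Enumerate all pairs (xs, ys) of finite lists of elements of G.  Starting from a member
   of P in a basic neighbourhood, build an increasing chain of basic neighbourhoods
   (I_k, O_k), each met by some L_k in P, such that at stage k
   - every element of xs is put into I_k or O_k,
   - some g with g h^-1 in O_k for all h in xs is found (g avoids the cosets of xs),
   - the high-transitivity requirement for (xs, ys) is witnessed by elements of I_k;
   the last step is where condition ( * ) is used.  The union of the I_k is then an
   infinite-index subgroup in the closure of P whose coset space is highly transitive.
   Since each requirement for (xs, ys) is open, HT ∩ closure(P) is also a G_delta. *)

From Stdlib Require Import List Arith Lia Classical ClassicalEpsilon Cantor.
Import ListNotations.

Lemma nth_map_seq {T : Type} (f : nat -> T) (d : T) n i :
  i < n -> nth i (map f (seq 0 n)) d = f i.
Proof.
  intros Hi. rewrite (nth_indep _ d (f 0)) by (rewrite length_map, length_seq; exact Hi).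
  rewrite map_nth, seq_nth by exact Hi. reflexivity.
Qed.

Fixpoint encode_list {T : Type} (f : T -> nat) (l : list T) : nat :=
  match l with
  | [] => 0
  | a :: l => S (to_nat (f a, encode_list f l))
  end.

Lemma encode_list_inj {T : Type} (f : T -> nat) : (forall x y, f x = f y -> x = y) ->
  forall l l', encode_list f l = encode_list f l' -> l = l'.
Proof.
  intros Hf. induction l as [|a l IH]; intros [|b l'] Hll'; try discriminate; [reflexivity|].
  assert (Hc : to_nat (f a, encode_list f l) = to_nat (f b, encode_list f l'))
    by exact (f_equal pred Hll').
  apply (f_equal of_nat) in Hc. rewrite !cancel_of_to in Hc. injection Hc as Hab Hll''.
  rewrite (Hf _ _ Hab), (IH _ Hll''). reflexivity.
Qed.

Lemma injection_nat_surjection {A : Type} (a0 : A) (f : A -> nat) :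
  (forall a b, f a = f b -> a = b) -> exists d : nat -> A, forall a, exists k, d k = a.
Proof.
  intros Hf.
  destruct (choice (fun k a => (exists b, f b = k) -> f a = k)) as [d Hd].
  { intros k. destruct (classic (exists b, f b = k)) as [[b Hb]|Hk].
    - exists b. auto.
    - exists a0. intros Hb. contradiction. }
  exists d. intros a. exists (f a). apply Hf, Hd. exists a. reflexivity.
Qed.

Lemma dependent_chain {A : Type} (Q : A -> Prop) (R : nat -> A -> A -> Prop) (a0 : A) :
  Q a0 -> (forall k a, Q a -> exists b, Q b /\ R k a b) ->
  exists sq : nat -> A, sq 0 = a0 /\ forall k, Q (sq k) /\ R k (sq k) (sq (S k)).
Proof.
  intros H0 Hstep.
  destruct (choice (fun (ka : nat * A) b => Q (snd ka) -> Q b /\ R (fst ka) (snd ka) b))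
    as [f Hf].
  { intros [k a]. destruct (classic (Q a)) as [Ha|Ha].
    - destruct (Hstep k a Ha) as [b Hb]. exists b. auto.
    - exists a. intros Ha'. contradiction. }
  pose (sq := fix sq k := match k with 0 => a0 | S k => f (k, sq k) end).
  assert (HQ : forall k, Q (sq k)).
  { induction k as [|k IH]; [exact H0|apply (Hf (k, sq k)), IH]. }
  exists sq. split; [reflexivity|]. intros k. split; [apply HQ|apply (Hf (k, sq k)), HQ].
Qed.

Lemma incl_increasing_union {T : Type} (A : nat -> list T) :
  (forall k m, k <= m -> incl (A k) (A m)) ->
  forall l, (forall x, In x l -> exists k, In x (A k)) -> exists K, incl l (A K).
Proof.
  intros Hmono l. induction l as [|a l IH]; intros Hl.
  - exists 0. apply incl_nil_l.
  - destruct (Hl a (or_introl eq_refl)) as [k1 Hk1].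
    destruct IH as [k2 Hk2]; [intros x Hx; apply Hl; right; exact Hx|].
    exists (max k1 k2). apply incl_cons.
    + apply (Hmono k1); [lia|exact Hk1].
    + eapply incl_tran; [exact Hk2|apply Hmono; lia].
Qed.

Section Cosets.
Context {G : group}.
Implicit Types (x y z : G) (L : subset_of G).

Lemma ginv_unique x y : gmul x y = gone -> y = ginv x.
Proof.
  intros Hxy. rewrite <- (gmul_1l G y), <- (gmul_Vl G x), <- gmul_assoc, Hxy.
  apply gmul_1r.
Qed.

Lemma ginv_mul x y : ginv (gmul x y) = gmul (ginv y) (ginv x).
Proof.
  symmetry. apply ginv_unique.
  rewrite <- gmul_assoc, (gmul_assoc G y), gmul_Vr, gmul_1l, gmul_Vr. reflexivity.
Qed.

Lemma ginv_ginv x : ginv (ginv x) = x.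
Proof. symmetry. apply ginv_unique, gmul_Vl. Qed.

Lemma same_coset_sym L : is_subgroup L ->
  forall x y, same_coset L x y -> same_coset L y x.
Proof.
  intros (_ & _ & Hinv) x y Hxy. unfold same_coset.
  rewrite <- (ginv_ginv y), <- ginv_mul. apply Hinv, Hxy.
Qed.

Lemma same_coset_trans L : is_subgroup L ->
  forall x y z, same_coset L x y -> same_coset L y z -> same_coset L x z.
Proof.
  intros (_ & Hmul & _) x y z Hxy Hyz. unfold same_coset.
  replace (gmul x (ginv z)) with (gmul (gmul x (ginv y)) (gmul y (ginv z))).
  - apply Hmul; assumption.
  - rewrite <- gmul_assoc, (gmul_assoc G (ginv y)), gmul_Vl, gmul_1l. reflexivity.
Qed.

Lemma same_coset_mulr L x y z :
  same_coset L x y -> same_coset L (gmul x z) (gmul y z).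
Proof.
  unfold same_coset. rewrite ginv_mul, <- gmul_assoc, (gmul_assoc G z), gmul_Vr, gmul_1l.
  trivial.
Qed.

Lemma infinite_index_avoid L : infinite_index L ->
  forall s : list G, exists g, forall h, In h s -> ~ same_coset L g h.
Proof.
  intros Hinf s. apply NNPP. intros Hcover. apply Hinf. exists s. intros g.
  apply NNPP. intros Hg. apply Hcover. exists g. intros h Hh Hgh. apply Hg. eauto.
Qed.

Lemma fresh_cosets L : is_subgroup L -> infinite_index L ->
  forall (s : list G) n, exists z : nat -> G,
    pairwise_distinct_cosets L n z /\
    forall i h, i < n -> In h s -> ~ same_coset L (z i) h.
Proof.
  intros HL Hinf s n. induction n as [|n (z & Hz & Hzs)].
  - exists (fun _ => gone). split; [intros i j Hi|intros i h Hi]; inversion Hi.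
  - destruct (infinite_index_avoid L Hinf (s ++ map z (seq 0 n))) as [g Hg].
    assert (Hgz : forall j, j < n -> ~ same_coset L g (z j)).
    { intros j Hj. apply Hg, in_or_app. right. apply in_map, in_seq. lia. }
    exists (fun i => if i =? n then g else z i). split.
    + intros i j Hi Hj Hij.
      destruct (Nat.eqb_spec i n), (Nat.eqb_spec j n); try lia.
      * apply Hgz. lia.
      * intros Hzg. apply (Hgz i); [lia|]. apply same_coset_sym; assumption.
      * apply Hz; lia.
    + intros i h Hi Hh. destruct (Nat.eqb_spec i n).
      * apply Hg, in_or_app. left. exact Hh.
      * apply Hzs; [lia|exact Hh].
Qed.

Lemma basic_app (I1 I2 O1 O2 : list G) L :
  basic I1 O1 L -> basic I2 O2 L -> basic (I1 ++ I2) (O1 ++ O2) L.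
Proof.
  intros [HI1 HO1] [HI2 HO2].
  split; intros c Hc; apply in_app_or in Hc as [Hc|Hc]; auto.
Qed.

Definition join_seq (n : nat) (a b : nat -> G) (i : nat) : G :=
  if i <? n then a i else b (i - n).

Lemma pairwise_distinct_join_seq L n a b : is_subgroup L ->
  pairwise_distinct_cosets L n a -> pairwise_distinct_cosets L n b ->
  (forall i j, i < n -> j < n -> ~ same_coset L (a i) (b j)) ->
  pairwise_distinct_cosets L (2 * n) (join_seq n a b).
Proof.
  intros HL Ha Hb Hab i j Hi Hj Hij. unfold join_seq.
  destruct (Nat.ltb_spec i n), (Nat.ltb_spec j n).
  - apply Ha; assumption.
  - apply Hab; lia.
  - intros Hba. apply (Hab j (i - n)); [lia|lia|]. apply same_coset_sym; assumption.
  - apply Hb; lia.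
Qed.

Definition coset_links (n : nat) (a b : nat -> G) : list G :=
  map (fun i => gmul (a i) (ginv (b i))) (seq 0 n).

Lemma coset_links_spec L n a b :
  (forall c, In c (coset_links n a b) -> L c) <->
  forall i, i < n -> same_coset L (a i) (b i).
Proof.
  unfold coset_links. split.
  - intros H i Hi. apply H, in_map_iff. exists i. split; [reflexivity|apply in_seq; lia].
  - intros H c Hc. apply in_map_iff in Hc as (i & <- & Hi). apply in_seq in Hi.
    apply H. lia.
Qed.

Definition coset_separators (n : nat) (g : nat -> G) : list G :=
  flat_map (fun i => map (fun j => gmul (g i) (ginv (g j)))
                         (filter (fun j => negb (i =? j)) (seq 0 n))) (seq 0 n).

Lemma pairwise_distinct_separators L n g :
  pairwise_distinct_cosets L n g <->
  forall c, In c (coset_separators n g) -> ~ L c.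
Proof.
  unfold coset_separators. split.
  - intros H c Hc. apply in_flat_map in Hc as (i & Hi & Hc).
    apply in_map_iff in Hc as (j & <- & Hj). apply filter_In in Hj as [Hj Hij].
    apply in_seq in Hi, Hj. apply H; try lia.
    intros ->. rewrite Nat.eqb_refl in Hij. discriminate.
  - intros H i j Hi Hj Hij. apply H, in_flat_map. exists i. split; [apply in_seq; lia|].
    apply in_map_iff. exists j. split; [reflexivity|]. apply filter_In. split; [apply in_seq; lia|].
    apply Nat.eqb_neq in Hij. rewrite Hij. reflexivity.
Qed.

End Cosets.

Section HighTransitivity.
Context {G : group}.
Implicit Types (L : subset_of G) (n : nat) (x y : nat -> G).

Definition coset_collision L n x : Prop :=
  exists i j, i < n /\ j < n /\ i <> j /\ same_coset L (x i) (x j).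

Definition ht_condition L n x y : Prop :=
  coset_collision L n x \/ coset_collision L n y \/
  exists gamma, forall i, i < n -> same_coset L (gmul (x i) gamma) (y i).

Lemma pairwise_distinct_no_collision L n x :
  ~ coset_collision L n x -> pairwise_distinct_cosets L n x.
Proof. intros Hx i j Hi Hj Hij Hxij. apply Hx. exists i, j. auto. Qed.

Lemma highly_transitive_ht_condition L :
  highly_transitive L -> forall n x y, ht_condition L n x y.
Proof.
  intros Hht n x y.
  destruct (classic (coset_collision L n x)) as [Hx|Hx]; [left; exact Hx|].
  destruct (classic (coset_collision L n y)) as [Hy|Hy]; [right; left; exact Hy|].
  right; right. apply Hht; apply pairwise_distinct_no_collision; assumption.
Qed.

Lemma ht_condition_highly_transitive L :
  (forall n x y, ht_condition L n x y) -> highly_transitive L.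
Proof.
  intros Hht n x y Hx Hy.
  destruct (Hht n x y) as [(i & j & Hi & Hj & Hij & Hxij)|[(i & j & Hi & Hj & Hij & Hyij)|Hg]].
  - exfalso. exact (Hx i j Hi Hj Hij Hxij).
  - exfalso. exact (Hy i j Hi Hj Hij Hyij).
  - exact Hg.
Qed.

Lemma ht_condition_finite_witness L n x y : ht_condition L n x y ->
  exists W : list G, (forall c, In c W -> L c) /\
    forall L', (forall c, In c W -> L' c) -> ht_condition L' n x y.
Proof.
  intros [(i & j & Hi & Hj & Hij & Hxij)|[(i & j & Hi & Hj & Hij & Hyij)|(g & Hg)]].
  - exists [gmul (x i) (ginv (x j))]. split.
    + intros c [<-|[]]. exact Hxij.
    + intros L' HL'. left. exists i, j. repeat split; try assumption. apply HL'. left. reflexivity.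
  - exists [gmul (y i) (ginv (y j))]. split.
    + intros c [<-|[]]. exact Hyij.
    + intros L' HL'. right; left. exists i, j. repeat split; try assumption.
      apply HL'. left. reflexivity.
  - exists (coset_links n (fun i => gmul (x i) g) y). split.
    + apply coset_links_spec. exact Hg.
    + intros L' HL'. right; right. exists g. apply coset_links_spec. exact HL'.
Qed.

Lemma ht_condition_mono L L' n x y :
  (forall c, L c -> L' c) -> ht_condition L n x y -> ht_condition L' n x y.
Proof.
  intros HLL' Hht. destruct (ht_condition_finite_witness L n x y Hht) as (W & HW & Hext).
  apply Hext. auto.
Qed.

Lemma condition_star_join (P : subset_of G -> Prop) L n a b I O :
  condition_star P -> P L -> 1 <= n ->
  pairwise_distinct_cosets L (2 * n) (join_seq n a b) -> basic I O L ->
  exists L' gamma, P L' /\ basic I O L' /\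
    forall i, i < n -> same_coset L' (gmul (a i) gamma) (b i).
Proof.
  intros Hstar HP Hn Hab HIO.
  destruct (Hstar L HP n (join_seq n a b) Hn Hab I O HIO) as (L' & g & HP' & HIO' & Hg).
  exists L', g. split; [exact HP'|split; [exact HIO'|]].
  intros i Hi. specialize (Hg i Hi). unfold join_seq in Hg.
  destruct (Nat.ltb_spec i n), (Nat.ltb_spec (i + n) n); try lia.
  rewrite Nat.add_sub in Hg. exact Hg.
Qed.

(* Condition ( * ) cannot be applied to (x, y) directly, as some x_i may share a coset
   with some y_j: we pass through fresh cosets z, moving x to z and then z to y. *)
Lemma condition_star_moves (P : subset_of G -> Prop) L I O n x y :
  (forall L, P L -> SubInf L) -> condition_star P -> P L -> basic I O L -> 1 <= n ->
  pairwise_distinct_cosets L n x -> pairwise_distinct_cosets L n y ->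
  exists L' gamma, P L' /\ basic I O L' /\
    forall i, i < n -> same_coset L' (gmul (x i) gamma) (y i).
Proof.
  intros HPs Hstar HP HIO Hn Hx Hy. destruct (HPs L HP) as [HL Hinf].
  destruct (fresh_cosets L HL Hinf (map x (seq 0 n) ++ map y (seq 0 n)) n)
    as (z & Hz & Hzxy).
  assert (Hzx : forall i j, i < n -> j < n -> ~ same_coset L (z i) (x j)).
  { intros i j Hi Hj. apply Hzxy; [exact Hi|]. apply in_or_app. left. apply in_map, in_seq. lia. }
  assert (Hzy : forall i j, i < n -> j < n -> ~ same_coset L (z i) (y j)).
  { intros i j Hi Hj. apply Hzxy; [exact Hi|]. apply in_or_app. right. apply in_map, in_seq. lia. }
  assert (Hxz : pairwise_distinct_cosets L (2 * n) (join_seq n x z)).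
  { apply pairwise_distinct_join_seq; try assumption.
    intros i j Hi Hj Hxz. apply (Hzx j i Hj Hi). apply same_coset_sym; assumption. }
  assert (HIO1 : basic I (coset_separators (2 * n) (join_seq n z y) ++ O) L).
  { split; [apply HIO|]. intros c Hc. apply in_app_or in Hc as [Hc|Hc]; [|apply HIO, Hc].
    revert c Hc. apply pairwise_distinct_separators, pairwise_distinct_join_seq; assumption. }
  destruct (condition_star_join P L n x z I _ Hstar HP Hn Hxz HIO1)
    as (L1 & g1 & HP1 & [HI1 HO1] & Hxz1).
  assert (Hzy1 : pairwise_distinct_cosets L1 (2 * n) (join_seq n z y)).
  { apply pairwise_distinct_separators. intros c Hc. apply HO1, in_or_app. left. exact Hc. }
  assert (HIO2 : basic (coset_links n (fun i => gmul (x i) g1) z ++ I) O L1).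
  { split.
    - intros c Hc. apply in_app_or in Hc as [Hc|Hc]; [|apply HI1, Hc].
      revert c Hc. apply coset_links_spec. exact Hxz1.
    - intros c Hc. apply HO1, in_or_app. right. exact Hc. }
  destruct (condition_star_join P L1 n z y _ O Hstar HP1 Hn Hzy1 HIO2)
    as (L2 & g2 & HP2 & [HI2 HO2] & Hzy2).
  assert (Hxz2 : forall i, i < n -> same_coset L2 (gmul (x i) g1) (z i)).
  { apply coset_links_spec. intros c Hc. apply HI2, in_or_app. left. exact Hc. }
  exists L2, (gmul g1 g2). split; [exact HP2|split].
  - split; [|exact HO2]. intros c Hc. apply HI2, in_or_app. right. exact Hc.
  - intros i Hi. rewrite gmul_assoc.
    apply (same_coset_trans L2 (proj1 (HPs L2 HP2)) _ (gmul (z i) g2)).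
    + apply same_coset_mulr, Hxz2, Hi.
    + apply Hzy2, Hi.
Qed.

Lemma condition_star_ht_condition (P : subset_of G -> Prop) L I O n x y :
  (forall L, P L -> SubInf L) -> condition_star P -> P L -> basic I O L ->
  exists L', P L' /\ basic I O L' /\ ht_condition L' n x y.
Proof.
  intros HPs Hstar HP HIO.
  destruct (classic (ht_condition L n x y)) as [Hht|Hht]; [exists L; auto|].
  destruct (Nat.eq_dec n 0) as [->|Hn].
  { exfalso. apply Hht. right; right. exists gone. intros i Hi. inversion Hi. }
  destruct (condition_star_moves P L I O n x y HPs Hstar HP HIO ltac:(lia))
    as (L' & g & HP' & HIO' & Hg).
  - apply pairwise_distinct_no_collision. intros Hx. apply Hht. left. exact Hx.
  - apply pairwise_distinct_no_collision. intros Hy. apply Hht. right; left. exact Hy.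
  - exists L'. split; [exact HP'|split; [exact HIO'|right; right; exists g; exact Hg]].
Qed.

End HighTransitivity.

Section Tasks.
Context {G : group}.
Implicit Types (L : subset_of G) (p : list G * list G).

Definition ht_task L p : Prop :=
  ht_condition L (length (fst p)) (fun i => nth i (fst p) gone) (fun i => nth i (snd p) gone).

Lemma ht_condition_ext L n (x x' y y' : nat -> G) :
  (forall i, i < n -> x i = x' i) -> (forall i, i < n -> y i = y' i) ->
  ht_condition L n x y -> ht_condition L n x' y'.
Proof.
  intros Hx Hy [(i & j & Hi & Hj & Hij & Hxij)|[(i & j & Hi & Hj & Hij & Hyij)|(g & Hg)]].
  - left. exists i, j. rewrite <- !Hx by assumption. auto.
  - right; left. exists i, j. rewrite <- !Hy by assumption. auto.
  - right; right. exists g. intros i Hi. rewrite <- Hx, <- Hy by assumption. auto.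
Qed.

Lemma ht_task_highly_transitive L : (forall p, ht_task L p) -> highly_transitive L.
Proof.
  intros Htask. apply ht_condition_highly_transitive. intros n x y.
  specialize (Htask (map x (seq 0 n), map y (seq 0 n))). unfold ht_task in Htask.
  simpl in Htask. rewrite length_map, length_seq in Htask.
  revert Htask. apply ht_condition_ext; intros i Hi; apply nth_map_seq, Hi.
Qed.

Lemma open_ht_task p : open_SubInf (fun L => SubInf L /\ ht_task L p).
Proof.
  intros L [HS Htask]. split; [exact HS|].
  destruct (ht_condition_finite_witness _ _ _ _ Htask) as (W & HW & Hext).
  exists W, []. split; [split; [exact HW|intros c []]|].
  intros L' HS' [HW' _]. split; [exact HS'|]. apply Hext, HW'.
Qed.

End Tasks.

Lemma list_pairs_enumeration {G : group} : countable_group G ->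
  exists t : nat -> list G * list G, forall p, exists k, t k = p.
Proof.
  intros [f Hf]. apply (injection_nat_surjection ([], [])
    (fun p => to_nat (encode_list f (fst p), encode_list f (snd p)))).
  intros [l1 l2] [l1' l2'] H. apply (f_equal of_nat) in H. rewrite !cancel_of_to in H.
  injection H as H1 H2. simpl in H1, H2.
  rewrite (encode_list_inj f Hf _ _ H1), (encode_list_inj f Hf _ _ H2). reflexivity.
Qed.

Record stage (G : group) := Stage { cand : subset_of G; inside : list G; outside : list G }.
Arguments Stage {G}. Arguments cand {G}. Arguments inside {G}. Arguments outside {G}.

Section Stages.
Context {G : group} (P : subset_of G -> Prop).
Hypothesis P_SubInf : forall L, P L -> SubInf L.
Hypothesis P_star : condition_star P.
Implicit Types (s : stage G) (l : list G) (p : list G * list G).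

Definition stage_ok s : Prop := P (cand s) /\ basic (inside s) (outside s) (cand s).

Definition stage_le s s' : Prop := incl (inside s) (inside s') /\ incl (outside s) (outside s').

Lemma stage_le_refl s : stage_le s s.
Proof. split; apply incl_refl. Qed.

Lemma stage_le_trans s1 s2 s3 : stage_le s1 s2 -> stage_le s2 s3 -> stage_le s1 s3.
Proof. intros [HI12 HO12] [HI23 HO23]. split; eapply incl_tran; eassumption. Qed.

Definition stage_meets p s : Prop :=
  (forall x, In x (fst p) -> In x (inside s) \/ In x (outside s)) /\
  (exists g, forall h, In h (fst p) -> In (gmul g (ginv h)) (outside s)) /\
  ht_task (fun c => In c (inside s)) p.

Lemma stage_decide s l : stage_ok s -> exists s', stage_ok s' /\ stage_le s s' /\
  forall x, In x l -> In x (inside s') \/ In x (outside s').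
Proof.
  intros Hs. induction l as [|a l IH].
  - exists s. split; [exact Hs|split; [apply stage_le_refl|intros x []]].
  - destruct IH as (s1 & (HP1 & HIO1) & Hle1 & Hl1).
    destruct (classic (cand s1 a)) as [Ha|Ha].
    + exists (Stage (cand s1) ([a] ++ inside s1) ([] ++ outside s1)).
      split; [split; [exact HP1|apply basic_app; [split; [intros c [<-|[]]|intros c []]|]]|split].
      * exact Ha.
      * exact HIO1.
      * apply (stage_le_trans _ _ _ Hle1). split; [apply incl_tl, incl_refl|apply incl_refl].
      * intros x [<-|Hx]; [left; left; reflexivity|].
        destruct (Hl1 x Hx); [left; right|right]; assumption.
    + exists (Stage (cand s1) ([] ++ inside s1) ([a] ++ outside s1)).
      split; [split; [exact HP1|apply basic_app; [split; [intros c []|intros c [<-|[]]]|]]|split].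
      * exact Ha.
      * exact HIO1.
      * apply (stage_le_trans _ _ _ Hle1). split; [apply incl_refl|apply incl_tl, incl_refl].
      * intros x [<-|Hx]; [right; left; reflexivity|].
        destruct (Hl1 x Hx); [left|right; right]; assumption.
Qed.

Lemma stage_avoid s l : stage_ok s -> exists s', stage_ok s' /\ stage_le s s' /\
  exists g, forall h, In h l -> In (gmul g (ginv h)) (outside s').
Proof.
  intros (HP & HIO). destruct (P_SubInf _ HP) as [_ Hinf].
  destruct (infinite_index_avoid _ Hinf l) as [g Hg].
  exists (Stage (cand s) ([] ++ inside s) (map (fun h => gmul g (ginv h)) l ++ outside s)).
  split; [split; [exact HP|apply basic_app; [split; [intros c []|]|exact HIO]]|split].
  - intros c Hc. apply in_map_iff in Hc as (h & <- & Hh). apply Hg, Hh.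
  - split; [apply incl_refl|apply incl_appr, incl_refl].
  - exists g. intros h Hh. apply in_or_app. left. apply in_map_iff. exists h. auto.
Qed.

Lemma stage_ht_task s p : stage_ok s -> exists s', stage_ok s' /\ stage_le s s' /\
  ht_task (fun c => In c (inside s')) p.
Proof.
  intros (HP & HIO).
  destruct (condition_star_ht_condition P (cand s) (inside s) (outside s) (length (fst p))
    (fun i => nth i (fst p) gone) (fun i => nth i (snd p) gone) P_SubInf P_star HP HIO)
    as (L' & HP' & HIO' & Htask).
  destruct (ht_condition_finite_witness _ _ _ _ Htask) as (W & HW & Hext).
  exists (Stage L' (W ++ inside s) ([] ++ outside s)).
  split; [split; [exact HP'|apply basic_app; [split; [exact HW|intros c []]|exact HIO']]|split].
  - split; [apply incl_appr, incl_refl|apply incl_refl].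
  - apply Hext. intros c Hc. apply in_or_app. left. exact Hc.
Qed.

Lemma stage_extend s p : stage_ok s -> exists s', stage_ok s' /\ stage_le s s' /\ stage_meets p s'.
Proof.
  intros Hs.
  destruct (stage_decide s (fst p) Hs) as (s1 & Hs1 & Hle1 & Hdec).
  destruct (stage_avoid s1 (fst p) Hs1) as (s2 & Hs2 & [HI12 HO12] & g & Hg).
  destruct (stage_ht_task s2 p Hs2) as (s3 & Hs3 & [HI23 HO23] & Htask).
  exists s3. split; [exact Hs3|split; [|split; [|split]]].
  - apply (stage_le_trans _ _ _ Hle1), (stage_le_trans _ s2); split; assumption.
  - intros x Hx. destruct (Hdec x Hx); [left|right]; auto.
  - exists g. auto.
  - exact Htask.
Qed.

End Stages.

Section Limit.
Context {G : group} (P : subset_of G -> Prop).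
Hypothesis P_SubInf : forall L, P L -> SubInf L.
Variable t : nat -> list G * list G.
Hypothesis t_onto : forall p, exists k, t k = p.
Variable sq : nat -> stage G.
Hypothesis sq_ok : forall k, stage_ok P (sq k).
Hypothesis sq_le : forall k, stage_le (sq k) (sq (S k)).
Hypothesis sq_meets : forall k, stage_meets (t k) (sq (S k)).

Definition limit : subset_of G := fun x => exists k, In x (inside (sq k)).

Lemma sq_le_mono k m : k <= m -> stage_le (sq k) (sq m).
Proof.
  intros Hkm. induction Hkm as [|m _ IH]; [apply stage_le_refl|].
  exact (stage_le_trans _ _ _ IH (sq_le m)).
Qed.

Lemma limit_basic k : basic (inside (sq k)) (outside (sq k)) limit.
Proof.
  split; [intros x Hx; exists k; exact Hx|].
  intros x Hx [j Hj]. destruct (sq_ok (max k j)) as (_ & HI & HO).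
  apply (HO x).
  - apply (proj2 (sq_le_mono k (max k j) ltac:(lia))), Hx.
  - apply HI, (proj1 (sq_le_mono j (max k j) ltac:(lia))), Hj.
Qed.

Lemma limit_decided x : limit x \/ exists k, In x (outside (sq k)).
Proof.
  destruct (t_onto ([x], [])) as [k Hk]. destruct (sq_meets k) as [Hdec _].
  rewrite Hk in Hdec. destruct (Hdec x (or_introl eq_refl)) as [Hx|Hx].
  - left. exists (S k). exact Hx.
  - right. exists (S k). exact Hx.
Qed.

Lemma limit_eventually x : limit x <-> exists K, forall m, K <= m -> cand (sq m) x.
Proof.
  split.
  - intros [k Hk]. exists k. intros m Hm. apply (sq_ok m), (proj1 (sq_le_mono k m Hm)), Hk.
  - intros [K HK]. destruct (limit_decided x) as [Hx|[k Hk]]; [exact Hx|].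
    exfalso. apply (proj2 (proj2 (sq_ok (max K k))) x).
    + apply (proj2 (sq_le_mono k (max K k) ltac:(lia))), Hk.
    + apply HK. lia.
Qed.

Lemma limit_subgroup : is_subgroup limit.
Proof.
  assert (Hsub : forall m, is_subgroup (cand (sq m))).
  { intros m. exact (proj1 (P_SubInf _ (proj1 (sq_ok m)))). }
  split; [|split].
  - apply limit_eventually. exists 0. intros m _. apply Hsub.
  - intros a b [Ka HKa]%limit_eventually [Kb HKb]%limit_eventually.
    apply limit_eventually. exists (Ka + Kb). intros m Hm.
    apply Hsub; [apply HKa|apply HKb]; lia.
  - intros a [Ka HKa]%limit_eventually. apply limit_eventually. exists Ka.
    intros m Hm. apply Hsub, HKa, Hm.
Qed.

Lemma limit_infinite_index : infinite_index limit.
Proof.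
  intros [s Hs]. destruct (t_onto (s, [])) as [k Hk].
  destruct (sq_meets k) as (_ & [g Hg] & _). rewrite Hk in Hg.
  destruct (Hs g) as (h & Hh & Hgh).
  exact (proj2 (limit_basic (S k)) _ (Hg h Hh) Hgh).
Qed.

Lemma limit_highly_transitive : highly_transitive limit.
Proof.
  apply ht_task_highly_transitive. intros p. destruct (t_onto p) as [k <-].
  destruct (sq_meets k) as (_ & _ & Htask).
  revert Htask. apply ht_condition_mono. intros c Hc. exists (S k). exact Hc.
Qed.

Lemma limit_closure : closure_SubInf P limit.
Proof.
  split; [split; [exact limit_subgroup|exact limit_infinite_index]|].
  intros I O [HI HO].
  destruct (incl_increasing_union (fun k => inside (sq k))
              (fun k m Hkm => proj1 (sq_le_mono k m Hkm)) I HI) as [K1 HK1].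
  destruct (incl_increasing_union (fun k => outside (sq k))
              (fun k m Hkm => proj2 (sq_le_mono k m Hkm)) O) as [K2 HK2].
  { intros x Hx. destruct (limit_decided x) as [Hl|Hl]; [|exact Hl].
    exfalso. exact (HO x Hx Hl). }
  destruct (sq_ok (max K1 K2)) as (HP & HIK & HOK). exists (cand (sq (max K1 K2))).
  split; [exact HP|split].
  - intros x Hx. apply HIK, (proj1 (sq_le_mono K1 (max K1 K2) ltac:(lia))), HK1, Hx.
  - intros x Hx. apply HOK, (proj2 (sq_le_mono K2 (max K1 K2) ltac:(lia))), HK2, Hx.
Qed.

End Limit.

Theorem mainTheorem7 (G : group) (P : subset_of G -> Prop) :
  countable_group G ->
  (forall L, P L -> SubInf L) ->
  condition_star P ->
  dense_in (fun L => HT L /\ closure_SubInf P L) (closure_SubInf P) /\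
  Gdelta_in (fun L => HT L /\ closure_SubInf P L) (closure_SubInf P).
Proof.
  intros Hcount HPs Hstar. destruct (list_pairs_enumeration Hcount) as [t Ht]. split.
  - intros L [_ HclL] I O HIO. destruct (HclL I O HIO) as (L0 & HP0 & HIO0).
    destruct (dependent_chain (stage_ok P)
                (fun k s s' => stage_le s s' /\ stage_meets (t k) s') (Stage L0 I O))
      as (sq & Hsq0 & Hsq).
    + split; assumption.
    + intros k s Hs. destruct (stage_extend P HPs Hstar s (t k) Hs) as (s' & ? & ? & ?).
      exists s'. auto.
    + assert (Hok : forall k, stage_ok P (sq k)) by (intros k; apply Hsq).
      assert (Hle : forall k, stage_le (sq k) (sq (S k))) by (intros k; apply Hsq).
      assert (Hmeets : forall k, stage_meets (t k) (sq (S k))) by (intros k; apply Hsq).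
      pose proof (limit_closure P HPs t Ht sq Hok Hle Hmeets) as Hcl.
      pose proof (limit_basic P sq Hok Hle 0) as Hbasic. rewrite Hsq0 in Hbasic.
      exists (limit sq). split; [split; [split; [apply Hcl|]|exact Hcl]|split; assumption].
      exact (limit_highly_transitive t Ht sq Hmeets).
  - exists (fun k L => SubInf L /\ ht_task L (t k)).
    split; [intros k; apply open_ht_task|]. intros L. split.
    + intros [[HS Hht] Hcl]. split; [exact Hcl|]. intros k. split; [exact HS|].
      apply highly_transitive_ht_condition, Hht.
    + intros [Hcl Htask]. split; [|exact Hcl]. split; [exact (proj1 Hcl)|].
      apply ht_task_highly_transitive. intros p. destruct (Ht p) as [k <-]. apply Htask.
Qed.
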